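(* Let $F$ be an algebraically closed field with $\operatorname{char}F\neq2$, let $V$ be an infinite-dimensional vector space over $F$ and $f$ a nondegenerate quadratic form on $V$. Then the Clifford algebra $Cl(V,f)$ is a locally matrix algebra and $\mathbf{n}(Cl(V,f))=2^{\infty}$.
   Context: A quadratic form on $V$ is a map $f:V\to F$ with $f(\alpha v)=\alpha^2f(v)$ for all $\alpha\in F$, $v\in V$, such that $f(u,v)=f(u+v)-f(u)-f(v)$ is a bilinear form; $f$ is nondegenerate if this bilinear form is nondegenerate. The Clifford algebra $Cl(V,f)$ is the unital associative algebra generated by $V$ and $1$ subject to $v^2=f(v)\cdot1$ for all $v\in V$. A unital algebra $A$ is locally matrix if every finite subset lies in a subalgebra $B$ with $1_A\in B$ and $B\cong M_n(F)$ for some $n$. For such $A$, $D(A)$ is the set of $n$ with a unital subalgebra isomorphic to $M_n(F)$, and the Steinitz number $\mathbf{n}(A)$ is the least common multiple of $D(A)$ in the lattice of Steinitz numbers $\prod_p p^{r_p}$, $r_p\in\mathbb{N}\cup\{0,\infty\}$; $2^\infty$ is the Steinitz number with exponent $\infty$ at $2$ and $0$ elsewhere. *)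

From HB Require Import structures.
From mathcomp Require Import all_boot all_order all_algebra.
Set Implicit Arguments. Unset Strict Implicit. Unset Printing Implicit Defensive.
Import Order.TTheory GRing.Theory Num.Theory.
Local Open Scope ring_scope.

Section Defs.
Variable F : fieldType.

Definition is_lin (U W : lmodType F) (g : U -> W) : Prop :=
  forall (a : F) (u v : U), g (a *: u + v) = a *: g u + g v.

Definition lin_indep (V : lmodType F) (s : seq V) : Prop :=
  forall c : 'I_(size s) -> F,
    \sum_(i < size s) c i *: s`_i = 0 -> forall i, c i = 0.

Definition infinite_dim (V : lmodType F) : Prop :=
  forall n : nat, exists s : seq V, size s = n /\ lin_indep s.

Definition polar (V : lmodType F) (f : V -> F) (u v : V) : F :=
  f (u + v) - f u - f v.

Definition is_quadratic_form (V : lmodType F) (f : V -> F) : Prop :=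
  (forall (a : F) (v : V), f (a *: v) = a ^+ 2 * f v) /\
  (forall a u1 u2 v, polar f (a *: u1 + u2) v = a * polar f u1 v + polar f u2 v) /\
  (forall a u v1 v2, polar f u (a *: v1 + v2) = a * polar f u v1 + polar f u v2).

Definition nondegenerate_qf (V : lmodType F) (f : V -> F) : Prop :=
  forall u : V, (forall v : V, polar f u v = 0) -> u = 0.

Definition alg_hom (A B : algType F) (h : A -> B) : Prop :=
  is_lin h /\ (forall x y, h (x * y) = h x * h y) /\ h 1 = 1.

(** (A, iota) is the Clifford algebra Cl(V,f): the unital associative algebra
    generated by V and 1 subject to v^2 = f(v) 1, given by its universal
    property (presentation by generators and relations). *)
Definition clifford_relations (V : lmodType F) (f : V -> F) (B : algType F)
  (g : V -> B) : Prop :=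
  is_lin g /\ forall v, g v * g v = (f v)%:A.

Definition is_clifford_algebra (V : lmodType F) (f : V -> F) (A : algType F)
  (iota : V -> A) : Prop :=
  clifford_relations f iota /\
  forall (B : algType F) (g : V -> B), clifford_relations f g ->
    exists h : A -> B, [/\ alg_hom h, (forall v, h (iota v) = g v) &
      forall h' : A -> B, alg_hom h' -> (forall v, h' (iota v) = g v) ->
        forall x, h' x = h x].

(** Unital embeddings of M_n(F) into A: their images are exactly the unital
    subalgebras of A isomorphic to M_n(F). *)
Definition matrix_embedding (A : algType F) (n : nat) (phi : 'M[F]_n -> A) : Prop :=
  [/\ injective phi, is_lin phi,
      (forall M N : 'M[F]_n, phi (M *m N) = phi M * phi N) & phi 1%:M = 1].

Definition locally_matrix (A : algType F) : Prop :=
  forall s : seq A, exists n : nat, exists phi : 'M[F]_n -> A,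
    matrix_embedding phi /\ forall x, x \in s -> exists M, phi M = x.

Definition Dset (A : algType F) (n : nat) : Prop :=
  exists phi : 'M[F]_n -> A, matrix_embedding phi.

End Defs.

(** Steinitz numbers: prod_p p^(r p), r p in N u {oo}; [None] encodes oo.
    Only the values at primes p matter. *)
Definition steinitz := nat -> option nat.

Definition ext_le (a b : option nat) : Prop :=
  match a, b with
  | _, None => True
  | None, Some _ => False
  | Some x, Some y => (x <= y)%N
  end.

Definition steinitz_dvd (s t : steinitz) : Prop :=
  forall p, prime p -> ext_le (s p) (t p).

Definition steinitz_of_nat (n : nat) : steinitz := fun p => Some (logn p n).

Definition is_steinitz_lcm (D : nat -> Prop) (s : steinitz) : Prop :=
  (forall d, D d -> steinitz_dvd (steinitz_of_nat d) s) /\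
  (forall t, (forall d, D d -> steinitz_dvd (steinitz_of_nat d) t) ->
     steinitz_dvd s t).

Definition two_inf : steinitz := fun p => if p == 2%N then None else Some 0%N.

From HB Require Import structures.
From mathcomp Require Import all_boot all_order all_algebra.
From mathcomp Require Import ring.
From Stdlib Require Import Classical ClassicalEpsilon.
Import GRing.Theory.
Set Implicit Arguments. Unset Strict Implicit. Unset Printing Implicit Defensive.
Local Open Scope ring_scope.

(* Since F is quadratically closed of characteristic not 2 and f is nondegenerate, every finite
   subset of V lies in the span of a hyperbolic system: pairs (u_i, w_i) with f u_i = f w_i = 0,
   B(u_i, w_i) = 1 and distinct pairs orthogonal; infinite dimension makes such systems
   arbitrarily long. In Cl(V,f) the images x_i, y_i of k such pairs satisfy the canonical
   anticommutation relations, and they generate 2^k x 2^k matrix units: tensor products of the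
   units x y, x, y, y x of M_2(F), twisted by the gradings x_i y_i - y_i x_i to make different
   pairs commute. As V generates Cl(V,f), every finite subset therefore lies in a unital copy of
   M_(2^k)(F). Conversely a unital embedding M_d(F) -> M_N(F) splits 1 into d conjugate
   orthogonal idempotents of equal rank, so d divides N: D(Cl(V,f)) consists of divisors of
   powers of 2 and contains every power of 2. *)

Section Linear.
Variable F : fieldType.

Section IsLin.
Variables (U W : lmodType F) (g : U -> W).
Hypothesis hg : is_lin g.

Lemma is_lin0 : g 0 = 0.
Proof.
have := hg 1 0 0; rewrite !scale1r addr0 => h.
by apply: (addrI (g 0)); rewrite addr0 -h.
Qed.

Lemma is_linD u v : g (u + v) = g u + g v.
Proof. by have := hg 1 u v; rewrite !scale1r. Qed.

Lemma is_linZ a u : g (a *: u) = a *: g u.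
Proof. by have := hg a u 0; rewrite !addr0 is_lin0 addr0. Qed.

Lemma is_lin_sum (I : Type) (r : seq I) (G : I -> U) :
  g (\sum_(i <- r) G i) = \sum_(i <- r) g (G i).
Proof.
elim: r => [|i r IH]; first by rewrite !big_nil is_lin0.
by rewrite !big_cons is_linD IH.
Qed.

End IsLin.

Lemma is_lin_mx_expand (W : lmodType F) m n (g : 'M[F]_(m, n) -> W) :
  is_lin g -> forall M, g M = \sum_i \sum_j M i j *: g (delta_mx i j).
Proof.
move=> hg M; rewrite {1}(matrix_sum_delta M) (is_lin_sum hg).
by apply: eq_bigr => i _; rewrite (is_lin_sum hg); apply: eq_bigr => j _; rewrite (is_linZ hg).
Qed.

Definition subspace (W : lmodType F) (P : W -> Prop) :=
  P 0 /\ forall a x y, P x -> P y -> P (a *: x + y).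

Section Subspace.
Variables (W : lmodType F) (P : W -> Prop).
Hypothesis hP : subspace P.

Lemma subspaceD x y : P x -> P y -> P (x + y).
Proof. by case: hP => _ hlin hx hy; have := hlin 1 x y hx hy; rewrite scale1r. Qed.

Lemma subspaceZ a x : P x -> P (a *: x).
Proof. by case: hP => P0 hlin hx; have := hlin a x 0 hx P0; rewrite addr0. Qed.

Lemma subspaceB x y : P x -> P y -> P (x - y).
Proof. by case: hP => _ hlin hx hy; rewrite -scaleN1r addrC; apply: hlin. Qed.

Lemma subspace_sum (I : Type) (G : I -> W) :
  (forall i, P (G i)) -> forall r, P (\sum_(i <- r) G i).
Proof.
move=> hG; elim => [|i r IH]; first by rewrite big_nil; case: hP.
by rewrite big_cons; apply: subspaceD.
Qed.

End Subspace.

Definition is_subalg (A : algType F) (P : A -> Prop) :=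
  [/\ subspace P, P 1 & forall x y, P x -> P y -> P (x * y)].

Lemma is_lin_image_subspace (U W : lmodType F) (g : U -> W) :
  is_lin g -> subspace (fun w => exists u, g u = w).
Proof.
move=> hg; split; first by exists 0; rewrite (is_lin0 hg).
by move=> a _ _ [u <-] [v <-]; exists (a *: u + v); rewrite hg.
Qed.

Lemma matrix_embedding_image_subalg (A : algType F) n (phi : 'M[F]_n -> A) :
  matrix_embedding phi -> is_subalg (fun x => exists M, phi M = x).
Proof.
case=> _ hlin hmul h1; split; first exact: is_lin_image_subspace.
  by exists 1%:M.
by move=> _ _ [M <-] [N <-]; exists (M *m N).
Qed.

End Linear.

Section MatrixUnits.
Variables (F : fieldType) (A : algType F).

Definition matrix_units (I : finType) (e : I -> I -> A) :=
  (forall i j k l, e i j * e k l = if j == k then e i l else 0) /\ \sum_i e i i = 1.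

Definition units_span (I : finType) (e : I -> I -> A) (x : A) :=
  forall P, subspace P -> (forall i j, P (e i j)) -> P x.

Lemma units_span_subspace (I : finType) (e : I -> I -> A) : subspace (units_span e).
Proof.
split=> [P [] //|a x y hx hy P hP he].
by case: (hP) => _; apply; [exact: hx | exact: hy].
Qed.

Lemma units_span_unit (I : finType) (e : I -> I -> A) i j : units_span e (e i j).
Proof. by move=> P _; apply. Qed.

Lemma units_spanMl (I J : finType) (e : I -> I -> A) (e' : J -> J -> A) E g h w :
  (forall i j, E * e i j = e' (g i j) (h i j)) -> units_span e w -> units_span e' (E * w).
Proof.
move=> hE hw P [P0 hP] he'; apply: (hw (fun w => P (E * w))).
- by split=> [|a u v hu hv]; rewrite ?mulr0 // mulrDr -scalerAr; apply: hP.
- by move=> i j; rewrite hE.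
Qed.

Definition mx_of_units n (e : 'I_n -> 'I_n -> A) (M : 'M[F]_n) : A :=
  \sum_i \sum_j M i j *: e i j.

Section MxOfUnits.
Variables (n : nat) (e : 'I_n -> 'I_n -> A).

Lemma mx_of_units_lin : is_lin (mx_of_units e).
Proof.
move=> a M N; rewrite /mx_of_units scaler_sumr -big_split; apply: eq_bigr => i _.
rewrite scaler_sumr -big_split; apply: eq_bigr => j _.
by rewrite !mxE scalerDl scalerA.
Qed.

Lemma mx_of_units_delta i j : mx_of_units e (delta_mx i j) = e i j.
Proof.
rewrite /mx_of_units (bigD1 i) //= [X in _ + X]big1 ?addr0; last first.
  by move=> k /negPf nki; rewrite big1 // => l _; rewrite mxE nki scale0r.
rewrite (bigD1 j) //= [X in _ + X]big1 ?addr0; first by rewrite mxE !eqxx scale1r.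
by move=> l /negPf nlj; rewrite mxE eqxx nlj scale0r.
Qed.

Hypothesis he : matrix_units e.

Lemma mx_of_unitsM M N : mx_of_units e (M *m N) = mx_of_units e M * mx_of_units e N.
Proof.
rewrite /mx_of_units mulr_suml; apply: eq_bigr => i _; rewrite mulr_suml.
have rowM j : (M i j *: e i j) * (\sum_k \sum_l N k l *: e k l)
              = \sum_l (M i j * N j l) *: e i l.
  rewrite mulr_sumr (bigD1 j) //= [X in _ + X]big1 ?addr0; last first.
    move=> k /negPf njk; rewrite mulr_sumr big1 // => l _.
    by rewrite -scalerAl -scalerAr he.1 eq_sym njk !scaler0.
  rewrite mulr_sumr; apply: eq_bigr => l _.
  by rewrite -scalerAl -scalerAr he.1 eqxx scalerA.
rewrite (eq_bigr _ (fun j _ => rowM j)) exchange_big /=.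
by apply: eq_bigr => l _; rewrite mxE scaler_suml.
Qed.

Lemma mx_of_units1 : mx_of_units e 1%:M = 1.
Proof.
rewrite /mx_of_units -he.2; apply: eq_bigr => i _.
rewrite (bigD1 i) //= [X in _ + X]big1 ?addr0; first by rewrite mxE eqxx scale1r.
by move=> j /negPf nij; rewrite mxE eq_sym nij scale0r.
Qed.

(* The entry [M r s] is recovered as the coefficient of [e a a]
   in [e a r * mx_of_units e M * e s a]. *)
Lemma mx_of_units_inj : injective (mx_of_units e).
Proof.
have corner M r s a : e a r * mx_of_units e M * e s a = M r s *: e a a.
  rewrite /mx_of_units mulr_sumr mulr_suml (bigD1 r) //= [X in _ + X]big1 ?addr0.
    rewrite mulr_sumr mulr_suml (bigD1 s) //= [X in _ + X]big1 ?addr0.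
      by rewrite -scalerAr -scalerAl he.1 eqxx he.1 eqxx.
    by move=> j /negPf njs; rewrite -scalerAr -scalerAl he.1 eqxx he.1 njs scaler0.
  move=> i /negPf nir; rewrite mulr_sumr mulr_suml big1 // => j _.
  by rewrite -scalerAr he.1 eq_sym nir scaler0 mul0r.
move=> M N eqMN; apply/matrixP => r s; apply/eqP; rewrite -subr_eq0.
have : (M - N) r s *: (1 : A) = 0.
  rewrite -he.2 scaler_sumr big1 // => a _; rewrite -corner.
  have -> : M - N = (-1) *: N + M by rewrite scaleN1r addrC.
  by rewrite mx_of_units_lin eqMN scaleN1r addNr mulr0 mul0r.
by move/eqP; rewrite scaler_eq0 oner_eq0 orbF !mxE.
Qed.

Lemma matrix_embedding_mx_of_units : matrix_embedding (mx_of_units e).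
Proof.
split; [exact: mx_of_units_inj | exact: mx_of_units_lin | exact: mx_of_unitsM | exact: mx_of_units1].
Qed.

End MxOfUnits.

Lemma matrix_units_embedding (I : finType) (e : I -> I -> A) : matrix_units e ->
  exists phi : 'M[F]_#|I| -> A,
    matrix_embedding phi /\ forall x, units_span e x -> exists M, phi M = x.
Proof.
move=> [eM e1]; pose e' (r s : 'I_#|I|) := e (enum_val r) (enum_val s).
have he' : matrix_units e'.
  split=> [i j k l|]; first by rewrite /e' eM (inj_eq enum_val_inj).
  rewrite -e1 (reindex (@enum_val I predT)) //=; apply: onW_bij; exact: enum_val_bij.
exists (mx_of_units e'); split; first exact: matrix_embedding_mx_of_units.
move=> x hx; apply: (hx (fun x => exists M, mx_of_units e' M = x)).
  exact/is_lin_image_subspace/mx_of_units_lin.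
move=> i j; exists (delta_mx (enum_rank i) (enum_rank j)).
by rewrite mx_of_units_delta /e' !enum_rankK.
Qed.

End MatrixUnits.

Section Anticommutation.
Variables (F : fieldType) (A : algType F).

Definition anticomm (a b : A) := a * b = - (b * a).

Lemma anticomm_sym a b : anticomm a b -> anticomm b a.
Proof. by rewrite /anticomm => ->; rewrite opprK. Qed.

Lemma commr_anticommM u a b : anticomm u a -> anticomm u b -> GRing.comm u (a * b).
Proof.
rewrite /anticomm /GRing.comm => ha hb.
by rewrite mulrA ha mulNr -(mulrA a u b) hb mulrN opprK mulrA.
Qed.

Definition car_pair (x y : A) := [/\ x * x = 0, y * y = 0 & x * y + y * x = 1].

Fixpoint car_system (R : seq (A * A)) : Prop :=
  if R is (x, y) :: R' then
    [/\ car_pair x y,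
        forall p, p \in R' ->
          [/\ anticomm x p.1, anticomm x p.2, anticomm y p.1 & anticomm y p.2]
      & car_system R']
  else True.

Section CarPair.
Variables (x y : A).
Hypothesis hxy : car_pair x y.

Let yx : y * x = 1 - x * y.
Proof. by case: hxy => _ _ <-; rewrite addrC addKr. Qed.
Let xyx : x * y * x = x.
Proof. by case: hxy => hxx _ _; rewrite -mulrA yx mulrBr mulr1 mulrA hxx mul0r subr0. Qed.
Let yxy : y * x * y = y.
Proof. by case: hxy => _ hyy _; rewrite yx mulrBl mul1r -mulrA hyy mulr0 subr0. Qed.
Let xyy : x * y * y = 0.
Proof. by case: hxy => _ hyy _; rewrite -mulrA hyy mulr0. Qed.
Let yxx : y * x * x = 0.
Proof. by case: hxy => hxx _ _; rewrite -mulrA hxx mulr0. Qed.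

(* The matrix units of M_2(F) realised by the pair: [e11 = x y], [e12 = x], [e21 = y], [e22 = y x]. *)
Definition car_unit (a b : bool) : A :=
  if a then (if b then x * y else x) else (if b then y else y * x).

Lemma car_unitM a b c d : car_unit a b * car_unit c d = if b == c then car_unit a d else 0.
Proof.
case: hxy => hxx hyy _.
by case: a; case: b; case: c; case: d => /=;
  rewrite ?mulrA ?xyx ?yxy ?xyy ?yxx ?hxx ?hyy ?mul0r ?mulr0 ?xyx ?yxy.
Qed.

Definition car_grading := x * y - y * x.

Lemma car_grading_sq : car_grading * car_grading = 1.
Proof.
case: hxy => _ _ hsum.
rewrite /car_grading mulrBr !mulrBl !mulrA xyx yxy xyy yxx !mul0r !subr0.
by rewrite sub0r opprK hsum.
Qed.

Lemma anticomm_car_grading_l : anticomm x car_grading.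
Proof.
case: hxy => hxx _ _.
by rewrite /anticomm /car_grading mulrBr mulrBl !mulrA hxx mul0r xyx yxx subr0 sub0r.
Qed.

Lemma anticomm_car_grading_r : anticomm y car_grading.
Proof.
case: hxy => _ hyy _.
by rewrite /anticomm /car_grading mulrBr mulrBl !mulrA yxy hyy mul0r xyy sub0r subr0 opprK.
Qed.

Lemma commr_car_grading a : anticomm x a -> anticomm y a -> GRing.comm car_grading a.
Proof.
move=> hx hy; apply/commr_sym/commrB; apply: commr_anticommM; exact: anticomm_sym.
Qed.

End CarPair.

Definition comm_seq (c : A) (R : seq (A * A)) :=
  forall p, p \in R -> GRing.comm c p.1 /\ GRing.comm c p.2.

Lemma car_system_twist z R : z * z = 1 -> comm_seq z R ->
  car_system R -> car_system [seq (z * p.1, z * p.2) | p <- R].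
Proof.
have zzM u v : GRing.comm z u -> GRing.comm z v -> (z * u) * (z * v) = (z * z) * (u * v).
  by move=> zu zv; rewrite -mulrA (mulrA u) -zu !mulrA.
move=> zz; elim: R => [|[a b] R IH] //= hR [[haa hbb hab] hanti hsys].
have [za zb] := hR (a, b) (mem_head _ _).
have {}hR : comm_seq z R by move=> p hp; apply: hR; rewrite in_cons hp orbT.
split; last exact: IH.
- by split; rewrite !zzM // zz !mul1r.
- move=> _ /mapP [q hq ->] /=; have [zq1 zq2] := hR q hq.
  have [h1 h2 h3 h4] := hanti q hq.
  by split; rewrite /anticomm !zzM // zz !mul1r.
Qed.

Section CarTensor.
Variables (x y : A) (I : finType) (e : I -> I -> A).

Definition car_tensor (p q : bool * I) := car_unit x y p.1 q.1 * e p.2 q.2.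

Lemma matrix_units_car_tensor : car_pair x y -> matrix_units e ->
    (forall i j, GRing.comm x (e i j) /\ GRing.comm y (e i j)) ->
  matrix_units car_tensor.
Proof.
move=> hxy [eM e1] hcomm.
have ecar a b i j : GRing.comm (e i j) (car_unit x y a b).
  have [/commr_sym ex /commr_sym ey] := hcomm i j.
  by case: a; case: b => //=; apply: commrM.
split=> [[a i] [b j] [c k] [d l]|] /=.
  rewrite /car_tensor /= -mulrA (mulrA (e i j)) ecar -mulrA mulrA car_unitM // eM xpair_eqE.
  by case: (b == c); case: (j == k); rewrite /= ?mul0r ?mulr0.
rewrite -(pair_big xpredT xpredT (fun a i => car_unit x y a a * e i i)) /=.
under eq_bigr => a _ do rewrite -mulr_sumr e1 mulr1.
by rewrite big_bool /=; case: hxy.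
Qed.

Lemma commr_car_tensor c : GRing.comm c x -> GRing.comm c y ->
  (forall i j, GRing.comm c (e i j)) -> forall p q, GRing.comm c (car_tensor p q).
Proof.
move=> cx cy ce [a i] [b j]; apply: commrM => //.
by case: a; case: b => //=; apply: commrM.
Qed.

Lemma units_span_car_unit a b : \sum_i e i i = 1 -> units_span car_tensor (car_unit x y a b).
Proof.
move=> e1; rewrite -[car_unit x y a b]mulr1 -e1 mulr_sumr.
apply: (subspace_sum (units_span_subspace car_tensor)) => i.
exact: (units_span_unit (a, i) (b, i)).
Qed.

Lemma units_span_car_tensorMl a b w :
  units_span e w -> units_span car_tensor (car_unit x y a b * w).
Proof. exact: (units_spanMl (g := fun i _ => (a, i)) (h := fun _ j => (b, j))). Qed.

End CarTensor.

Lemma car_system_matrix_units R : car_system R ->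
  exists (I : finType) (e : I -> I -> A), [/\ matrix_units e, #|I| = (2 ^ size R)%N,
    forall c, comm_seq c R -> forall i j, GRing.comm c (e i j)
  & forall p, p \in R -> units_span e p.1 /\ units_span e p.2].
Proof.
move sz: (size R) => n; elim: n R sz => [|n IH] [|[x y] R] //= => [_ _|[sz] [hxy hanti hsys]].
  exists 'I_1, (fun _ _ => 1); split=> //.
  - split; last by rewrite big_ord1.
    by move=> i j k l; rewrite mul1r (ord1 j) (ord1 k) eqxx.
  - by rewrite card_ord.
  - by move=> c _ i j; apply: commr1.
pose z := car_grading x y.
have zR : comm_seq z R.
  by move=> p hp; have [h1 h2 h3 h4] := hanti p hp; split; apply: commr_car_grading.
have [I [e [he card hcomm hspan]]] :=
  IH _ (etrans (size_map _ _) sz) (car_system_twist (car_grading_sq hxy) zR hsys).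
have xye i j : GRing.comm x (e i j) /\ GRing.comm y (e i j).
  split; apply: hcomm => _ /mapP [q hq ->] /=; have [h1 h2 h3 h4] := hanti q hq.
    by split; apply: commr_anticommM => //; apply: anticomm_car_grading_l.
  by split; apply: commr_anticommM => //; apply: anticomm_car_grading_r.
exists (bool * I)%type, (car_tensor x y e); split.
- exact: matrix_units_car_tensor.
- by rewrite card_prod card_bool card expnS.
- move=> c hc; have [cx cy] := hc (x, y) (mem_head _ _).
  have cz : GRing.comm c z by apply: commrB; apply: commrM.
  apply: commr_car_tensor => // i j; apply: hcomm => _ /mapP [q hq ->] /=.
  have [cq1 cq2] : GRing.comm c q.1 /\ GRing.comm c q.2 by apply: hc; rewrite in_cons hq orbT.
  by split; apply: commrM.
- move=> p; rewrite in_cons => /orP [/eqP -> | hp] /=.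
    by split; [exact: (units_span_car_unit true false he.2)
              | exact: (units_span_car_unit false true he.2)].
  have [s1 s2] := hspan _ (map_f (fun p => (z * p.1, z * p.2)) hp).
  (* [p.i = z * (z * p.i)] with [z = car_unit true true - car_unit false false]. *)
  have untwist w : units_span e (z * w) -> units_span (car_tensor x y e) w.
    move=> hw; rewrite -[w]mul1r -(car_grading_sq hxy) -mulrA {1}/car_grading mulrBl.
    apply: (subspaceB (units_span_subspace _)).
      exact: (units_span_car_tensorMl true true).
    exact: (units_span_car_tensorMl false false).
  by split; apply: untwist.
Qed.

Lemma car_system_embedding R : car_system R ->
  exists phi : 'M[F]_(2 ^ size R) -> A, matrix_embedding phi /\
    forall p, p \in R -> (exists M, phi M = p.1) /\ (exists M, phi M = p.2).
Proof.
move=> /car_system_matrix_units [I [e [he card _ hspan]]].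
rewrite -card; have [phi [emb himg]] := matrix_units_embedding he.
by exists phi; split=> // p /hspan [s1 s2]; split; apply: himg.
Qed.

End Anticommutation.

Section QuadraticForm.
Variables (F : fieldType) (V : lmodType F) (f : V -> F).
Hypothesis hq : is_quadratic_form f.

Local Notation B := (polar f).

Lemma qfZ a u : f (a *: u) = a ^+ 2 * f u. Proof. by case: hq. Qed.
Lemma qf0 : f 0 = 0. Proof. by rewrite -(scale0r 0) qfZ expr2 !mul0r. Qed.
Lemma qfN u : f (- u) = f u. Proof. by rewrite -scaleN1r qfZ sqrrN expr1n mul1r. Qed.
Lemma qfD u v : f (u + v) = f u + f v + B u v. Proof. by rewrite /polar; ring. Qed.

Lemma polarC u v : B u v = B v u. Proof. by rewrite /polar [u + v]addrC; ring. Qed.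
Lemma polar0l v : B 0 v = 0. Proof. by rewrite /polar add0r qf0; ring. Qed.
Lemma polarDl u w v : B (u + w) v = B u v + B w v.
Proof. by case: hq => _ [hl _]; rewrite -[u]scale1r hl mul1r scale1r. Qed.
Lemma polarZl a u v : B (a *: u) v = a * B u v.
Proof. by case: hq => _ [hl _]; rewrite -[a *: u]addr0 hl polar0l addr0. Qed.
Lemma polarNl u v : B (- u) v = - B u v. Proof. by rewrite -scaleN1r polarZl mulN1r. Qed.
Lemma polarBl u w v : B (u - w) v = B u v - B w v. Proof. by rewrite polarDl polarNl. Qed.
Lemma polarDr u w v : B v (u + w) = B v u + B v w.
Proof. by rewrite polarC polarDl !(polarC v). Qed.
Lemma polarZr a u v : B v (a *: u) = a * B v u. Proof. by rewrite polarC polarZl polarC. Qed.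
Lemma polarBr u w v : B v (u - w) = B v u - B v w.
Proof. by rewrite polarC polarBl !(polarC v). Qed.
Lemma polarxx u : B u u = f u + f u.
Proof.
rewrite /polar -[u + u]/(u *+ 2) -scaler_nat qfZ.
have -> : (2%:R : F) ^+ 2 = 4%:R by rewrite expr2 -natrM.
by rewrite -[4%N]/(2 + 2)%N natrD; ring.
Qed.

Lemma qfB u v : f (u - v) = f u + f v - B u v.
Proof. by rewrite qfD qfN polarC polarNl polarC. Qed.

Definition orth_pairs (x : V) (Q : seq (V * V)) :=
  forall p, p \in Q -> B x p.1 = 0 /\ B x p.2 = 0.

Fixpoint hyperbolic (Q : seq (V * V)) : Prop :=
  if Q is (u, w) :: Q' then
    [/\ f u = 0, f w = 0, B u w = 1, orth_pairs u Q' /\ orth_pairs w Q' & hyperbolic Q']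
  else True.

Fixpoint hspan (Q : seq (V * V)) (x : V) : Prop :=
  if Q is (u, w) :: Q' then exists a b, hspan Q' (x - a *: u - b *: w) else x = 0.

Lemma orth_pairs_cons x p Q :
  orth_pairs x (p :: Q) <-> (B x p.1 = 0 /\ B x p.2 = 0) /\ orth_pairs x Q.
Proof.
split=> [h|[hp hQ] q]; last by rewrite in_cons => /orP [/eqP -> // | /hQ].
by split=> [|q qQ]; apply: h; rewrite ?mem_head // in_cons qQ orbT.
Qed.

Lemma orth_pairs_lin a x y Q : orth_pairs x Q -> orth_pairs y Q -> orth_pairs (a *: x + y) Q.
Proof.
move=> hx hy p hp; have [x1 x2] := hx p hp; have [y1 y2] := hy p hp.
by rewrite !polarDl !polarZl x1 x2 y1 y2 mulr0 addr0.
Qed.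

Lemma orth_pairsZ a x Q : orth_pairs x Q -> orth_pairs (a *: x) Q.
Proof.
move=> hx; rewrite -[a *: x]addr0; apply: orth_pairs_lin => // p _.
by rewrite !polar0l.
Qed.

Lemma orth_pairsD x y Q : orth_pairs x Q -> orth_pairs y Q -> orth_pairs (x + y) Q.
Proof. by move=> hx hy; rewrite -[x]scale1r; apply: orth_pairs_lin. Qed.

Lemma orth_pairsB x y Q : orth_pairs x Q -> orth_pairs y Q -> orth_pairs (x - y) Q.
Proof. by move=> hx hy; rewrite -scaleN1r addrC; apply: orth_pairs_lin. Qed.

Lemma hspan_orth Q x y : hspan Q x -> orth_pairs y Q -> B x y = 0.
Proof.
elim: Q x => [|[u w] Q IH] x /=; first by move=> ->; rewrite polar0l.
move=> [a [b hx]] /orth_pairs_cons [[/= yu yw] hy].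
by move: (IH _ hx hy); rewrite !polarBl !polarZl (polarC u) (polarC w) yu yw !mulr0 !subr0.
Qed.

Lemma hspan_catl P Q x : hspan Q x -> hspan (P ++ Q) x.
Proof.
by elim: P => [|[u w] P IH] //= hx; exists 0, 0; rewrite !scale0r !subr0; apply: IH.
Qed.

Lemma hyperbolic_proj Q : hyperbolic Q -> forall x, exists v, orth_pairs v Q /\ hspan Q (x - v).
Proof.
elim: Q => [|[u w] Q IH] /=; first by move=> _ x; exists x; rewrite subrr.
move=> [fu fw Buw [ou ow] hQ] x.
pose x1 := x - B x w *: u - B x u *: w.
have [v [ov hv]] := IH hQ x1.
exists v; split; last first.
  by exists (B x w), (B x u); rewrite /x1 (addrAC x (- v)) (addrAC (x - _ *: u) (- v)).
apply/orth_pairs_cons; split => //=.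
have /eqP := hspan_orth hv ou; have /eqP := hspan_orth hv ow.
rewrite !polarBl !subr_eq0 => /eqP <- /eqP <-.
by rewrite !polarZl !polarxx fu fw (polarC w u) Buw; split; ring.
Qed.

Hypothesis hinf : infinite_dim V.

(* A nontrivial relation among [size Ws + 1] independent vectors solves the homogeneous
   system [B s w = 0], [w \in Ws]. *)
Lemma exists_orth_nonzero (Ws : seq V) :
  exists2 s, s != 0 & forall w, w \in Ws -> B s w = 0.
Proof.
have [S [hS hind]] := hinf (size Ws).+1.
pose Mx := \matrix_(i < size S, j < size Ws) B S`_i Ws`_j.
have rk : (0 < \rank (kermx Mx))%N.
  by rewrite mxrank_ker subn_gt0 (leq_ltn_trans (rank_leq_col Mx)) // hS.
have [i hi] : exists i, row i (kermx Mx) != 0.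
  apply/existsP; apply: contraTT rk => /existsPn hker.
  suff -> : kermx Mx = 0 by rewrite mxrank0.
  by apply/row_matrixP => i; rewrite row0; apply/eqP/negbNE/hker.
pose c := row i (kermx Mx).
have hc : c *m Mx = 0 by rewrite -row_mul mulmx_ker row0.
exists (\sum_(k < size S) c 0 k *: S`_k).
  apply: contra hi => /eqP hs0; apply/eqP/rowP => k.
  by rewrite [RHS]mxE; exact: (hind (fun k => c 0 k) hs0 k).
move=> w hw; rewrite -(nth_index 0 hw).
have hj : (index w Ws < size Ws)%N by rewrite index_mem.
have := congr1 (fun M : 'M[F]_(1, size Ws) => M 0 (Ordinal hj)) hc.
rewrite !mxE => <-.
elim/big_rec2: _ => [|k y1 y2 _ <-]; first by rewrite polar0l.
by rewrite polarDl polarZl /Mx !mxE.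
Qed.

Lemma exists_orth_pairs_nonzero Q v :
  exists s, [/\ s != 0, orth_pairs s Q & B s v = 0].
Proof.
have [s s0 hs] := exists_orth_nonzero (v :: flatten [seq [:: p.1; p.2] | p <- Q]).
exists s; split=> //; last by apply: hs; rewrite mem_head.
move=> p hp; split; apply: hs; rewrite in_cons; apply/orP; right;
  apply/flattenP; exists [:: p.1; p.2]; rewrite ?(map_f _ hp) ?inE ?eqxx ?orbT //.
Qed.

Hypothesis hnd : nondegenerate_qf f.

Lemma exists_orth_dual Q s : hyperbolic Q -> orth_pairs s Q -> s != 0 ->
  exists y, orth_pairs y Q /\ B s y = 1.
Proof.
move=> hQ os s0.
have [y0 hy0] : exists y0, B s y0 != 0.
  apply: NNPP => hn; move/eqP: s0; apply; apply: hnd => v.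
  by apply/eqP/negbNE/negP => hv; apply: hn; exists v.
have [y [oy /hspan_orth /(_ os)]] := hyperbolic_proj hQ y0.
rewrite polarC polarBr => /eqP; rewrite subr_eq0 => /eqP sy; rewrite sy in hy0.
exists ((B s y)^-1 *: y); split; first exact: orth_pairsZ.
by rewrite polarZr mulVf.
Qed.

Lemma hyperbolic_cons_isotropic Q v : hyperbolic Q -> orth_pairs v Q -> v != 0 -> f v = 0 ->
  exists w, hyperbolic ((v, w) :: Q).
Proof.
move=> hQ ov v0 fv0; have [y [oy vy]] := exists_orth_dual hQ ov v0.
exists (y - f y *: v); split=> //.
- by rewrite qfB qfZ polarZr fv0 polarC vy; ring.
- by rewrite polarBr polarZr polarxx fv0 vy; ring.
- by split=> //; apply: orth_pairsB => //; apply: orth_pairsZ.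
Qed.

Hypothesis sqrt_exists : forall a : F, exists r, r ^+ 2 = a.
Hypothesis two_nz : (2%:R : F) != 0.

Lemma exists_orth_value Q v c : hyperbolic Q -> orth_pairs v Q -> f v != 0 ->
  exists t, [/\ orth_pairs t Q, B v t = 0 & f t = c].
Proof.
move=> hQ ov fv0.
have [s [s0 os sv]] := exists_orth_pairs_nonzero Q v.
have vs : B v s = 0 by rewrite polarC.
case: (eqVneq (f s) 0) => fs0; last first.
  have [rho rho2] := sqrt_exists (c / f s).
  exists (rho *: s); split; first exact: orth_pairsZ.
    by rewrite polarZr vs mulr0.
  by rewrite qfZ rho2 mulfVK.
(* Correct a dual [y] of [s] to be orthogonal to [v], then move along the isotropic [s]. *)
have [y [oy sy]] := exists_orth_dual hQ os s0.
have fv2 : f v + f v != 0 by rewrite -mulr2n -mulr_natl mulf_neq0.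
pose r := y - (B y v / (f v + f v)) *: v.
have rv : B r v = 0 by rewrite /r polarBl polarZl polarxx; field.
have sr : B s r = 1 by rewrite /r polarBr polarZr sy sv mulr0 subr0.
exists ((c - f r) *: s + r); split.
- by apply: orth_pairs_lin => //; apply: orth_pairsB => //; apply: orth_pairsZ.
- by rewrite polarDr polarZr vs (polarC v r) rv; ring.
- by rewrite qfD qfZ fs0 polarZl sr; ring.
Qed.

(* [v = (v + t) / 2 + (v - t) / 2] with [v + t], [v - t] isotropic and [B (v + t) (v - t) = 4 f v]. *)
Lemma hyperbolic_pair_through Q v : hyperbolic Q -> orth_pairs v Q -> v != 0 ->
  exists u w a b, hyperbolic ((u, w) :: Q) /\ v = a *: u + b *: w.
Proof.
move=> hQ ov v0; case: (eqVneq (f v) 0) => fv0.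
  have [w hw] := hyperbolic_cons_isotropic hQ ov v0 fv0.
  by exists v, w, 1, 0; rewrite scale1r scale0r addr0.
have [t [ot vt ft]] := exists_orth_value (- f v) hQ ov fv0.
pose a := v + t; pose b := v - t; pose D := B a b.
have fa : f a = 0 by rewrite /a qfD vt ft; ring.
have fb : f b = 0 by rewrite /b qfB vt ft; ring.
have D0 : D != 0.
  have -> : D = 2%:R * 2%:R * f v.
    by rewrite /D /a /b polarDl !polarBr !polarxx vt (polarC t v) vt ft; ring.
  by rewrite !mulf_neq0.
exists a, (D^-1 *: b), 2%:R^-1, (D / 2%:R); split.
  split=> //; first by rewrite qfZ fb mulr0.
  - by rewrite polarZr mulVf.
  - split; first exact: orth_pairsD.
    by apply: orth_pairsZ; apply: orth_pairsB.
rewrite scalerA mulrAC mulfV // mul1r -scalerDr /a /b addrACA subrr addr0.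
by rewrite -mulr2n -scaler_nat scalerA mulVf // scale1r.
Qed.

Lemma hyperbolic_extend (L : seq V) Q : hyperbolic Q ->
  exists P, hyperbolic (P ++ Q) /\ forall l, l \in L -> hspan (P ++ Q) l.
Proof.
elim: L Q => [|l L IH] Q hQ; first by exists [::].
have [v [ov hv]] := hyperbolic_proj hQ l.
have [v0|v0] := eqVneq v 0.
  have [P [hP hL]] := IH Q hQ; exists P; split=> // x; rewrite in_cons => /orP [/eqP -> | /hL //].
  by apply: hspan_catl; rewrite v0 subr0 in hv.
have [u [w [a [b [hQ' hv']]]]] := hyperbolic_pair_through hQ ov v0.
have [P [hP hL]] := IH _ hQ'.
exists (rcons P (u, w)); rewrite cat_rcons; split=> // x; rewrite in_cons => /orP [/eqP -> | /hL //].
by apply: hspan_catl => /=; exists a, b; rewrite -addrA -opprD -hv'.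
Qed.

Lemma exists_hyperbolic_size n : exists Q, hyperbolic Q /\ (n <= size Q)%N.
Proof.
elim: n => [|n [Q [hQ hn]]]; first by exists [::].
have [s [s0 os _]] := exists_orth_pairs_nonzero Q 0.
have [u [w [_ [_ [hQ' _]]]]] := hyperbolic_pair_through hQ os s0.
by exists ((u, w) :: Q).
Qed.

End QuadraticForm.

Section CliffordHyperbolic.
Variables (F : fieldType) (V : lmodType F) (f : V -> F) (A : algType F) (iota : V -> A).
Hypothesis hrel : clifford_relations f iota.

Lemma iota_anticomm u w : iota u * iota w + iota w * iota u = (polar f u w)%:A.
Proof.
have [hlin hsq] := hrel; have := hsq (u + w).
rewrite (is_linD hlin) mulrDl !mulrDr !hsq qfD !scalerDl => h.
by apply: (addrI ((f u)%:A + (f w)%:A)); rewrite -h addrACA (addrC (f w)%:A).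
Qed.

Lemma anticomm_iota u w : polar f u w = 0 -> anticomm (iota u) (iota w).
Proof.
by move=> h; apply/eqP; rewrite -addr_eq0 iota_anticomm h scale0r.
Qed.

Lemma car_system_iota Q : hyperbolic f Q -> car_system [seq (iota p.1, iota p.2) | p <- Q].
Proof.
have [_ hsq] := hrel.
elim: Q => [|[u w] Q IH] //= [fu fw uw [ou ow] hQ]; split; last exact: IH.
- by split; rewrite ?hsq ?fu ?fw ?scale0r // iota_anticomm uw scale1r.
- move=> _ /mapP [p hp ->] /=; have [h1 h2] := ou p hp; have [h3 h4] := ow p hp.
  by split; apply: anticomm_iota.
Qed.

Lemma iota_hspan (P : A -> Prop) Q x : subspace P ->
  (forall p, p \in Q -> P (iota p.1) /\ P (iota p.2)) -> hspan Q x -> P (iota x).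
Proof.
have [hlin _] := hrel; move=> hP.
elim: Q x => [|[u w] Q IH] x hQ /=; first by move=> ->; rewrite (is_lin0 hlin); case: hP.
move=> [a [b hx]]; have [hu hw] := hQ (u, w) (mem_head _ _).
have {}hQ p : p \in Q -> P (iota p.1) /\ P (iota p.2).
  by move=> pQ; apply: hQ; rewrite in_cons pQ orbT.
have -> : x = (x - a *: u - b *: w) + b *: w + a *: u by rewrite !subrK.
move: (x - _ - _) hx => r hr; rewrite !(is_linD hlin) !(is_linZ hlin).
by do 2![apply: (subspaceD hP); last exact: (subspaceZ hP)]; apply: IH.
Qed.

Lemma hyperbolic_embedding Q : hyperbolic f Q ->
  exists phi : 'M[F]_(2 ^ size Q) -> A,
    matrix_embedding phi /\ forall x, hspan Q x -> exists M, phi M = iota x.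
Proof.
move=> /car_system_iota /car_system_embedding; rewrite size_map => -[phi [emb himg]].
exists phi; split=> // x; apply: (@iota_hspan (fun a => exists M, phi M = a)).
  by case: emb => _ hlin _ _; apply: is_lin_image_subspace.
by move=> p hp; apply: (himg (iota p.1, iota p.2)); apply: map_f.
Qed.

End CliffordHyperbolic.

Section CliffordInduction.
Variables (F : fieldType) (A : algType F) (U : A -> Prop).
Hypothesis hU : is_subalg U.

(* The universal property is applied to the subalgebra [U], which first needs a boolean membership. *)
Definition subalg_pred : {pred A} := fun a => if excluded_middle_informative (U a) then true else false.

Lemma subalg_predP a : reflect (U a) (a \in subalg_pred).
Proof. by rewrite unfold_in /subalg_pred; case: excluded_middle_informative; constructor. Qed.

Lemma subalg_pred_closed : subalg_closed subalg_pred.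
Proof.
case: hU => [[_ hlin] h1 hmul]; split=> [|a x y|x y].
- exact/subalg_predP.
- by move=> /subalg_predP hx /subalg_predP hy; apply/subalg_predP; apply: hlin.
- by move=> /subalg_predP hx /subalg_predP hy; apply/subalg_predP; apply: hmul.
Qed.

HB.instance Definition _ := GRing.isSubalgClosed.Build F A subalg_pred subalg_pred_closed.
Record subalg_type := SubalgType { subalg_val : A; _ : subalg_val \in subalg_pred }.
HB.instance Definition _ := [isSub for subalg_val].
HB.instance Definition _ := [Choice of subalg_type by <:].
HB.instance Definition _ := [SubChoice_isSubAlgebra of subalg_type by <:].

(* Corestricting [iota] to [U] and composing back gives an algebra map extending [iota],
   which by uniqueness is the identity. *)
Lemma clifford_ind (V : lmodType F) (f : V -> F) (iota : V -> A) :
  is_clifford_algebra f iota -> (forall v, U (iota v)) -> forall x, U x.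
Proof.
move=> [hrel huniv] hiota x.
have memi v : iota v \in subalg_pred by apply/subalg_predP.
pose g v : subalg_type := SubalgType (memi v).
have hg : clifford_relations f g.
  case: hrel => hlin hsq; split=> [a u v|v]; apply: val_inj; rewrite /= ?hlin ?hsq //.
have [h [[hlin [hmul h1]] hhi _]] := huniv _ g hg.
have [h0 [_ _ huniq]] := huniv A iota hrel.
have e_id : x = h0 x by apply: (huniq id).
have e_h : subalg_val (h x) = h0 x.
  apply: (huniq (subalg_val \o h)) => [|v]; last by rewrite /= hhi.
  by split=> [a y z|]; rewrite /= ?hlin //; split=> [y z|]; rewrite /= ?hmul ?h1.
by rewrite e_id -e_h; apply/subalg_predP/valP.
Qed.

End CliffordInduction.

Section CliffordLocallyMatrix.
Variables (F : fieldType) (V : lmodType F) (f : V -> F) (A : algType F) (iota : V -> A).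

Definition generated (L : seq V) (x : A) :=
  forall P, is_subalg P -> (forall v, v \in L -> P (iota v)) -> P x.

Lemma generated_subalg L : is_subalg (generated L).
Proof.
split; first split.
- by move=> P [[]].
- by move=> a x y hx hy P hP hL; case: (hP) => [[_ hlin] _ _]; apply: hlin; [apply: hx | apply: hy].
- by move=> P [].
- by move=> x y hx hy P hP hL; case: (hP) => _ _ hmul; apply: hmul; [apply: hx | apply: hy].
Qed.

Lemma generated_sub L L' x : {subset L <= L'} -> generated L x -> generated L' x.
Proof. by move=> sLL' hx P hP hL'; apply: hx => // v /sLL'; apply: hL'. Qed.

Lemma generated_catl L L' x : generated L x -> generated (L ++ L') x.
Proof. by apply: generated_sub => v hv; rewrite mem_cat hv. Qed.

Lemma generated_catr L L' x : generated L' x -> generated (L ++ L') x.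
Proof. by apply: generated_sub => v hv; rewrite mem_cat hv orbT. Qed.

Lemma clifford_generated : is_clifford_algebra f iota -> forall x, exists L, generated L x.
Proof.
move=> hcl; apply: (clifford_ind _ hcl) => [|v]; last first.
  by exists [:: v] => P _; apply; rewrite mem_head.
split; first split.
- by exists [::]; case: (generated_subalg [::]) => [[]].
- move=> a x y [L hx] [L' hy]; exists (L ++ L').
  case: (generated_subalg (L ++ L')) => [[_ hlin] _ _].
  by apply: hlin; [apply: generated_catl | apply: generated_catr].
- by exists [::]; case: (generated_subalg [::]).
- move=> x y [L hx] [L' hy]; exists (L ++ L').
  case: (generated_subalg (L ++ L')) => _ _ hmul.
  by apply: hmul; [apply: generated_catl | apply: generated_catr].
Qed.

Hypotheses (hq : is_quadratic_form f) (hinf : infinite_dim V) (hnd : nondegenerate_qf f).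
Hypothesis sqrt_exists : forall a : F, exists r, r ^+ 2 = a.
Hypotheses (two_nz : (2%:R : F) != 0) (hcl : is_clifford_algebra f iota).

Lemma clifford_cover (s : seq A) : exists k (phi : 'M[F]_(2 ^ k) -> A),
  matrix_embedding phi /\ forall x, x \in s -> exists M, phi M = x.
Proof.
have [L hL] : exists L, forall x, x \in s -> generated L x.
  elim: s => [|a s [L hL]]; first by exists [::].
  have [La ha] := clifford_generated hcl a.
  exists (La ++ L) => x; rewrite in_cons => /orP [/eqP -> | /hL].
    exact: generated_catl.
  exact: generated_catr.
have [Q [hQ hLQ]] := hyperbolic_extend hq hinf hnd sqrt_exists two_nz L (Q := [::]) I.
rewrite cats0 in hQ hLQ.
have [phi [emb himg]] := hyperbolic_embedding hcl.1 hQ.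
exists (size Q), phi; split=> // x /hL /(_ (fun y => exists M, phi M = y)); apply.
  exact: matrix_embedding_image_subalg.
by move=> v /hLQ; apply: himg.
Qed.

End CliffordLocallyMatrix.

Section MatrixDivisibility.
Variable F : fieldType.

Lemma mxrank_add_orth_idem N (X Y : 'M[F]_N) :
    X *m X = X -> Y *m Y = Y -> X *m Y = 0 -> Y *m X = 0 ->
  \rank (X + Y)%R = (\rank X + \rank Y)%N.
Proof.
move=> XX YY XY YX.
have cap0 : \rank (X :&: Y)%MS = 0%N.
  have [D dX] := submxP (capmxSl X Y); have [E eY] := submxP (capmxSr X Y).
  have <- : (X :&: Y)%MS *m X = (X :&: Y)%MS by rewrite {1}dX -mulmxA XX -dX.
  by rewrite eY -mulmxA YX mulmx0 mxrank0.
rewrite -mxrank_sum_cap cap0 addn0; apply/eqP; rewrite eqn_leq !mxrankS //; last first.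
  exact: addmx_sub_adds.
rewrite addsmx_sub; apply/andP; split.
  by rewrite -{1}XX -[X *m X]addr0 -XY -mulmxDr submxMl.
by rewrite -{1}YY -[Y *m Y]add0r -YX -mulmxDr submxMl.
Qed.

Lemma mxrank_sum_orth_idem N (P : nat -> 'M[F]_N) :
    (forall i, P i *m P i = P i) -> (forall i j, i != j -> P i *m P j = 0) ->
  forall k, \rank (\sum_(i < k) P i)%R = (\sum_(i < k) \rank (P i))%N.
Proof.
move=> PP PQ; elim=> [|k IH]; first by rewrite !big_ord0 mxrank0.
rewrite !big_ord_recr /= -IH; apply: mxrank_add_orth_idem => //.
- rewrite mulmx_suml; apply: eq_bigr => i _; rewrite mulmx_sumr (bigD1 i) //= big1 ?addr0 //.
  by move=> j ji; apply: PQ; rewrite eq_sym.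
- by rewrite mulmx_suml big1 // => i _; apply: PQ; rewrite neq_ltn ltn_ord.
- by rewrite mulmx_sumr big1 // => i _; apply: PQ; rewrite neq_ltn ltn_ord orbT.
Qed.

(* The images of the diagonal units split [1] into [m] orthogonal idempotents, which are
   pairwise conjugate and hence of equal rank. *)
Lemma dvdn_unital_mx_hom m N (theta : 'M[F]_m -> 'M[F]_N) : is_lin theta ->
  {morph theta : M M' / M *m M'} -> theta 1%:M = 1%:M -> (m %| N)%N.
Proof.
case: m theta => [|m] theta hlin hmul h1.
  case: N theta hlin hmul h1 => // N theta hlin _ h1.
  have : (1%:M : 'M[F]_N.+1) 0 0 = 0.
    by rewrite -h1 (_ : 1%:M = 0) ?(is_lin0 hlin) ?mxE //; apply/matrixP => [[]].
  by rewrite mxE eqxx => /eqP; rewrite oner_eq0.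
pose P i := if (i < m.+1)%N then theta (delta_mx (inord i : 'I_m.+1) (inord i)) else 0.
have PP i : P i *m P i = P i.
  by rewrite /P; case: ifP => _; rewrite ?mulmx0 // -hmul mul_delta_mx.
have PQ i j : i != j -> P i *m P j = 0.
  move=> ij; rewrite /P; case: ifP => hi; case: ifP => hj; rewrite ?mulmx0 ?mul0mx //.
  rewrite -hmul mul_delta_mx_cond (_ : (_ == _) = false) ?(is_lin0 hlin) //.
  by apply/negbTE; apply: contra ij => /eqP/(congr1 val); rewrite /= !inordK // => ->.
have Psum : \sum_(i < m.+1) P i = 1%:M.
  rewrite -h1 (eq_bigr (fun i : 'I_m.+1 => theta (delta_mx i i))); last first.
    by move=> i _; rewrite /P ltn_ord inord_val.
  rewrite -(is_lin_sum hlin); congr theta; apply/matrixP => r s.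
  rewrite summxE (bigD1 r) //= big1 => [|k kr]; last by rewrite mxE eq_sym (negbTE kr).
  by rewrite !mxE eqxx addr0 eq_sym.
have Prank i : (i < m.+1)%N -> \rank (P i) = \rank (P 0%N).
  have le_rank i' j : (i' < m.+1)%N -> (j < m.+1)%N -> (\rank (P i') <= \rank (P j))%N.
    move=> hi hj.
    have -> : P i' = theta (delta_mx (inord i') (inord j)) *m P j
                     *m theta (delta_mx (inord j) (inord i')).
      by rewrite /P hi hj -!hmul !mul_delta_mx.
    exact: leq_trans (mxrankM_maxl _ _) (mxrankM_maxr _ _).
  by move=> hi; apply/eqP; rewrite eqn_leq !le_rank.
have := mxrank_sum_orth_idem PP PQ m.+1; rewrite Psum mxrank1.
rewrite (eq_bigr (fun _ => \rank (P 0%N))) => [->|i _]; last exact: Prank.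
by rewrite sum_nat_const card_ord dvdn_mulr.
Qed.

Lemma dvdn_matrix_embedding_sub (A : algType F) m N (phi : 'M[F]_m -> A) (psi : 'M[F]_N -> A) :
    matrix_embedding phi -> matrix_embedding psi -> (forall M, exists P, psi P = phi M) ->
  (m %| N)%N.
Proof.
move=> [_ plin pmul p1] [qinj qlin qmul q1] himg.
have ex M : exists P, psi P == phi M by have [P hP] := himg M; exists P; apply/eqP.
pose theta M := xchoose (ex M).
have psi_theta M : psi (theta M) = phi M by apply/eqP; exact: xchooseP (ex M).
apply: (@dvdn_unital_mx_hom m N theta).
- by move=> a M M'; apply: qinj; rewrite qlin !psi_theta plin.
- by move=> M M'; apply: qinj; rewrite qmul !psi_theta pmul.
- by apply: qinj; rewrite psi_theta p1 q1.
Qed.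

(* The matrix units of a copy of M_d(F) lie in a single copy of M_(g k)(F),
   which then contains the whole copy. *)
Lemma dvdn_Dset_of_cover (A : algType F) (g : nat -> nat) :
    (forall s : seq A, exists k (psi : 'M[F]_(g k) -> A),
       matrix_embedding psi /\ forall x, x \in s -> exists M, psi M = x) ->
  forall d, Dset A d -> exists k, (d %| g k)%N.
Proof.
move=> cover d [phi emb]; have [_ phi_lin _ _] := emb.
have [k [psi [emb' himg]]] :=
  cover [seq phi (delta_mx ij.1 ij.2) | ij <- enum {: 'I_d * 'I_d}].
exists k; apply: (dvdn_matrix_embedding_sub emb emb') => M.
have [hsub _ _] := matrix_embedding_image_subalg emb'.
rewrite (is_lin_mx_expand phi_lin); apply: (subspace_sum hsub) => i.
apply: (subspace_sum hsub) => j; apply: (subspaceZ hsub); apply: himg.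
have ij_enum : (i, j) \in enum {: 'I_d * 'I_d} by rewrite mem_enum.
exact: (map_f _ ij_enum).
Qed.

End MatrixDivisibility.

Lemma steinitz_lcm_two_inf (D : nat -> Prop) :
    (forall d, D d -> exists k, (d %| 2 ^ k)%N) -> (forall n, exists2 k, (n <= k)%N & D (2 ^ k)%N) ->
  is_steinitz_lcm D two_inf.
Proof.
move=> Ddvd Dpow; split=> [d /Ddvd [k dk] p p_pr|t ht p p_pr].
  rewrite /two_inf /steinitz_of_nat; case: eqP => [//|p2] /=.
  have := dvdn_leq_log p (expn_gt0 2 k) dk.
  by rewrite lognX (@logn_prime p 2) // (introF eqP p2) muln0.
rewrite /two_inf; case: eqP => [->|_]; last by case: (t p).
case t2: (t 2%N) => [y|] //=.
have [k yk /ht /(_ 2%N isT)] := Dpow y.+1.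
by rewrite /steinitz_of_nat t2 /= pfactorK // => /(leq_trans yk); rewrite ltnn.
Qed.

Lemma closed_field_sqrt (F : closedFieldType) (a : F) : exists r, r ^+ 2 = a.
Proof.
have /closed_rootP [r] : size ('X^2 - a%:P : {poly F}) != 1%N by rewrite size_XnsubC.
by rewrite rootE !hornerE subr_eq0 => /eqP hr; exists r.
Qed.

Theorem theorem5 (F : closedFieldType) (V : lmodType F) (f : V -> F)
  (A : algType F) (iota : V -> A) :
  ~~ (2%N \in [pchar F]) ->
  infinite_dim V ->
  is_quadratic_form f -> nondegenerate_qf f ->
  is_clifford_algebra f iota ->
  locally_matrix A /\ is_steinitz_lcm (Dset A) two_inf.
Proof.
move=> char2 hinf hq hnd hcl.
have two_nz : (2%:R : F) != 0 by apply: contra char2 => h; rewrite inE /= h.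
have cover := clifford_cover hq hinf hnd (@closed_field_sqrt F) two_nz hcl.
split; first by move=> s; have [k [phi hphi]] := cover s; exists (2 ^ k)%N, phi.
apply: steinitz_lcm_two_inf; first exact: (dvdn_Dset_of_cover (g := expn 2)).
move=> n; have [Q [hQ hn]] := exists_hyperbolic_size hq hinf hnd (@closed_field_sqrt F) two_nz n.
have [phi [emb _]] := hyperbolic_embedding hcl.1 hQ.
by exists (size Q) => //; exists phi.
Qed.
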